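(* Let $S=(w_1,\ldots,w_{3m})$ be a list of $3m$ positive integers and let $b$ be an integer. If there is a partition of $\{1,\ldots,3m\}$ into $m$ sets $S_1,\ldots,S_m$ with $\sum_{i\in S_j}w_i=b$ for each $j$, then the graph $G(S,b)$ has a path decomposition of width at most $4$ and length at most $l=1-2m+2\sum_{i=1}^{3m}w_i$.
   Context: A path decomposition of a graph $G$ is a sequence $(X_1,\ldots,X_l)$ of subsets of $V(G)$ covering $V(G)$, such that every edge lies in some $X_i$, and $X_i\cap X_k\subseteq X_j$ whenever $i\leq j\leq k$; width is $\max_i|X_i|-1$, length is $l$. Construction of $G(S,b)$: for each $i\in\{1,\ldots,3m\}$ build $H_i$ from $w_i$ disjoint copies $K_3^{i,1},\ldots,K_3^{i,w_i}$ of $K_3$ and $w_i-1$ disjoint copies $K_4^{i,1},\ldots,K_4^{i,w_i-1}$ of $K_4$ by identifying, for each $q=1,\ldots,w_i-1$, two distinct vertices of $K_4^{i,q}$ with a vertex of $K_3^{i,q}$ and with a vertex of $K_3^{i,q+1}$ respectively, done so that each vertex of each $K_3^{i,q}$ is identified with at most one vertex from other cliques (a chain alternating triangles and $K_4$'s). Build $H_{m,b}$ from $m+1$ disjoint copies $K_5^1,\ldots,K_5^{m+1}$ of $K_5$ and $m$ disjoint copies $P_b^1,\ldots,P_b^m$ of the path with $b$ edges, by identifying, for each $j=1,\ldots,m$, one endpoint of $P_b^j$ with a vertex of $K_5^j$ and the other endpoint with a vertex of $K_5^{j+1}$, such that no vertex of any $K_5^j$ is identified with endpoints of two different paths. $G(S,b)$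 is the disjoint union of $H_1,\ldots,H_{3m}$ and $H_{m,b}$. *)

From HB Require Import structures.
From mathcomp Require Import all_boot all_order all_algebra.
Set Implicit Arguments. Unset Strict Implicit. Unset Printing Implicit Defensive.

(* Path decompositions of a graph given by a vertex predicate V and a  *)
(* (symmetric) edge relation E on an eqType T.  Bags are sequences;    *)
Section PathDec.
Variable T : eqType.

Definition is_path_decomposition (V : T -> Prop) (E : T -> T -> Prop)
    (Xs : seq (seq T)) : Prop :=
  (forall X x, X \in Xs -> x \in X -> V x) /\
  (forall x, V x -> exists2 X, X \in Xs & x \in X) /\
  (forall x y, E x y -> exists2 X, X \in Xs & (x \in X) && (y \in X)) /\
  (forall i j k x, i <= j -> j <= k -> k < size Xs ->
     x \in nth [::] Xs i -> x \in nth [::] Xs k -> x \in nth [::] Xs j).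

(* width <= w  iff  max_i |X_i| - 1 <= w, i.e. every bag has <= w+1 vertices *)
Definition pd_width_le (Xs : seq (seq T)) (w : nat) : Prop :=
  forall X, X \in Xs -> size (undup X) <= w.+1.

Definition pd_length (Xs : seq (seq T)) : nat := size Xs.
End PathDec.

Inductive vert : Type :=
  | Tri of nat & nat & nat  (* Tri i q k : vertex k (<3) of triangle K_3^{i,q} *)
  | K4x of nat & nat & nat  (* K4x i q k : the two (k<2) non-identified vertices
                               of K_4^{i,q} *)
  | Cl5 of nat & nat        (* Cl5 j k  : vertex k (<5) of K_5^j *)
  | Pth of nat & nat.       (* Pth j p  : internal vertex p (0<p<b) of P_b^j *)

Lemma vert_dec : comparable vert.
Proof. move=> x y; rewrite /decidable; decide equality; exact: (fun a b => decP (@eqP _ a b)). Qed.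
HB.instance Definition _ := comparableMixin vert_dec.

(* the p-th vertex (0 <= p <= b) of the path P_b^j; its endpoints are
   identified with vertex 1 of K_5^j and vertex 0 of K_5^{j+1}, so no
   vertex of a K_5 is identified with endpoints of two different paths *)
Definition path_vertex (b j p : nat) : vert :=
  if p == 0 then Cl5 j 1 else if p == b then Cl5 j.+1 0 else Pth j p.

(* All indices are 0-based: H_i for i < 3m, triangles q < w_i, K_4's
   q < w_i - 1 (K_4^{i,q} glues vertex 1 of triangle q to vertex 0 of
   triangle q+1), K_5's j <= m, paths j < m.  w_i = nth 0 S i.
   G(S,b) is the union of the following cliques. *)
Definition GSb_clique (S : seq nat) (m b : nat) (C : seq vert) : Prop :=
  (exists i q, [/\ i < 3 * m, q < nth 0 S i &
                 C = [:: Tri i q 0; Tri i q 1; Tri i q 2]]) \/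
  (exists i q, [/\ i < 3 * m, q.+1 < nth 0 S i &
                 C = [:: Tri i q 1; Tri i q.+1 0; K4x i q 0; K4x i q 1]]) \/
  (exists j, j <= m /\ C = [:: Cl5 j 0; Cl5 j 1; Cl5 j 2; Cl5 j 3; Cl5 j 4]) \/
  (exists j p, [/\ j < m, p < b &
                 C = [:: path_vertex b j p; path_vertex b j p.+1]]).

Definition GSb_vertex (S : seq nat) (m b : nat) (v : vert) : Prop :=
  exists2 C, GSb_clique S m b C & v \in C.

Definition GSb_edge (S : seq nat) (m b : nat) (u v : vert) : Prop :=
  u != v /\ exists2 C, GSb_clique S m b C & (u \in C) && (v \in C).

From HB Require Import structures.
From mathcomp Require Import all_boot all_order all_algebra.
From mathcomp Require Import zify.
Set Implicit Arguments. Unset Strict Implicit. Unset Printing Implicit Defensive.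

(* Cut every path P_b^j into its b edges and hand them out to the triangles of
   the H_i with i in S_j, consecutively: since the weights of S_j add up to b,
   triangle q of H_i gets exactly one edge, at position offset i + q of P_b^j.
   Walk through the K_5's and paths in order; at K_5^j take the bag K_5^j, and
   at the p-th edge of P_b^j take first the bag "its triangle + the edge", then
   (if that triangle is followed by a K_4 in its H_i) the bag "that K_4 + the
   right endpoint of the edge".  Every vertex then lies in a run of consecutive
   bags, every bag has at most 5 vertices, and there are
   (m + 1) + sum_i (w_i + w_i - 1) = 1 - 2m + 2 sum_i w_i bags. *)

Lemma mem_In (T : eqType) (x : T) (s : seq T) : x \in s <-> List.In x s.
Proof.
elim: s => [|a s IH] //=; rewrite in_cons; split.
- by case/orP=> [/eqP->|/IH]; [left|right].
- by case=> [->|/IH->]; rewrite ?eqxx ?orbT.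
Qed.

Lemma sumn_add_pred (I : Type) (f : I -> nat) (s : seq I) : all (fun i => 0 < f i) s ->
  sumn [seq f i + (f i).-1 | i <- s] + size s = (sumn (map f s)).*2.
Proof. by elim: s => [|i s IH] //= /andP [fi_gt0 /IH]; lia. Qed.

Section SortedBags.
Variables (K T : eqType) (le : rel K) (bag : K -> seq T) (keys : seq K).
Hypotheses (le_refl : reflexive le) (le_trans : transitive le) (le_total : total le).

Definition sorted_bags := map bag (sort le keys).

Lemma size_sorted_bags : size sorted_bags = size keys.
Proof. by rewrite size_map size_sort. Qed.

Lemma sorted_bags_width w :
  (forall k, size (bag k) <= w.+1) -> pd_width_le sorted_bags w.
Proof. by move=> bag_small X /mapP [k _ ->]; apply: leq_trans (size_undup _) _. Qed.

Lemma is_path_decomposition_sorted_bags (V : T -> Prop) (E : T -> T -> Prop) :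
  (forall k x, k \in keys -> x \in bag k -> V x) ->
  (forall x, V x -> exists2 k, k \in keys & x \in bag k) ->
  (forall x y, E x y -> exists2 k, k \in keys & (x \in bag k) && (y \in bag k)) ->
  (forall x a c d, a \in keys -> c \in keys -> d \in keys -> le a c -> le c d ->
     x \in bag a -> x \in bag d -> x \in bag c) ->
  is_path_decomposition V E sorted_bags.
Proof.
move=> bagV coverV coverE bag_convex; split; [|split; [|split]].
- by move=> X x /mapP [k + ->]; rewrite mem_sort; apply: bagV.
- by move=> x /coverV [k kK xk]; exists (bag k) => //; rewrite map_f ?mem_sort.
- by move=> x y /coverE [k kK xyk]; exists (bag k) => //; rewrite map_f ?mem_sort.
move=> i j k x ij jk; rewrite /sorted_bags size_map.
have := sort_sorted le_total keys; have := mem_sort le keys.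
case: (sort le keys) => [//|k0 s] mem_s sorted_s ks.
have js := leq_ltn_trans jk ks; have i_s := leq_ltn_trans ij js.
rewrite !(nth_map k0) //.
have in_keys t : t < size (k0 :: s) -> nth k0 (k0 :: s) t \in keys.
  by move=> ts; rewrite -mem_s mem_nth.
have le_nth := sorted_leq_nth le_trans le_refl k0 sorted_s.
by apply: bag_convex; rewrite ?in_keys ?le_nth ?inE.
Qed.

End SortedBags.

Definition lex_le (s t : nat * nat) := (s.1 < t.1) || ((s.1 == t.1) && (s.2 <= t.2)).

Lemma path_vertex_cases b j p :
  [\/ p = 0 /\ path_vertex b j p = Cl5 j 1,
      [/\ p <> 0, p = b & path_vertex b j p = Cl5 j.+1 0] |
      [/\ p <> 0, p <> b & path_vertex b j p = Pth j p]].
Proof.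
rewrite /path_vertex; case: eqP => [|p_neq0]; first by constructor 1.
by case: eqP => [|p_neqb]; [constructor 2 | constructor 3].
Qed.

Lemma path_vertex0 b j : path_vertex b j 0 = Cl5 j 1.
Proof. by rewrite /path_vertex eqxx. Qed.

Lemma path_vertex_last b j : 0 < b -> path_vertex b j b = Cl5 j.+1 0.
Proof. by case: (path_vertex_cases b j b) => [[]|[]|[]] //; lia. Qed.

Lemma path_vertex_inner b j p : 0 < p < b -> path_vertex b j p = Pth j p.
Proof. by case: (path_vertex_cases b j p) => [[]|[]|[]] //; lia. Qed.

Lemma path_vertex_neq_Tri b j p i q r : path_vertex b j p <> Tri i q r.
Proof. by case: (path_vertex_cases b j p) => [[_ ->]|[_ _ ->]|[_ _ ->]]. Qed.

Lemma path_vertex_neq_K4x b j p i q r : path_vertex b j p <> K4x i q r.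
Proof. by case: (path_vertex_cases b j p) => [[_ ->]|[_ _ ->]|[_ _ ->]]. Qed.

Lemma path_vertex_eq_Cl5 b j p j' r : path_vertex b j p = Cl5 j' r ->
  [/\ p = 0, j' = j & r = 1] \/ [/\ p = b, j' = j.+1 & r = 0].
Proof.
by case: (path_vertex_cases b j p) => [[-> ->]|[_ -> ->]|[_ _ ->]] // [<- <-]; [left|right].
Qed.

Lemma path_vertex_eq_Pth b j p j' p' : path_vertex b j p = Pth j' p' ->
  [/\ 0 < p, p != b, j' = j & p' = p].
Proof.
case: (path_vertex_cases b j p) => [[_ ->]|[_ _ ->]|[? /eqP ? ->]] // [<- <-].
by split=> //; lia.
Qed.

Inductive bag_key := KeyK5 of nat | KeyTri of nat & nat | KeyK4 of nat & nat.

Lemma bag_key_dec : comparable bag_key.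
Proof. move=> x y; rewrite /decidable; decide equality; exact: (fun a b => decP (@eqP _ a b)). Qed.
HB.instance Definition _ := comparableMixin bag_key_dec.

Section Construction.
Variables (m b n : nat) (w part : nat -> nat).
Hypothesis part_lt : forall i, i < n -> part i < m.
Hypothesis block_sum : forall j, j < m -> \sum_(0 <= i < n | part i == j) w i = b.

Definition prefix_weight j x := \sum_(0 <= i < x | part i == j) w i.
Definition offset i := prefix_weight (part i) i.

Lemma prefix_weightS j x :
  prefix_weight j x.+1 = prefix_weight j x + (if part x == j then w x else 0).
Proof. by rewrite /prefix_weight big_mkcond big_nat_recr //= -big_mkcond. Qed.

Lemma leq_prefix_weight j x y : x <= y -> prefix_weight j x <= prefix_weight j y.
Proof. by move=> xy; rewrite /prefix_weight (big_cat_nat (leq0n x) xy) leq_addr. Qed.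

Lemma offset_bound i : i < n -> offset i + w i <= b.
Proof.
move=> i_lt; rewrite -(block_sum (part_lt i_lt)) -/(prefix_weight (part i) n).
by have := leq_prefix_weight (part i) i_lt; rewrite prefix_weightS eqxx.
Qed.

Lemma offset_lt i i' : i < i' -> part i = part i' -> offset i + w i <= offset i'.
Proof.
move=> ii' part_ii'; rewrite /offset -part_ii'.
by have := leq_prefix_weight (part i) ii'; rewrite prefix_weightS eqxx.
Qed.

Lemma offset_inj i i' q q' : q < w i -> q' < w i' -> part i = part i' ->
  offset i + q = offset i' + q' -> i = i' /\ q = q'.
Proof.
move=> q_lt q'_lt part_ii' E; case: (ltngtP i i') => ii'.
- by have := offset_lt ii' part_ii'; lia.
- by have := offset_lt ii' (esym part_ii'); lia.
- by subst; split=> //; lia.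
Qed.

Lemma prefix_weight_step j p x : p < prefix_weight j x ->
  exists2 i, i < x & prefix_weight j i <= p < prefix_weight j i.+1.
Proof.
elim: x => [|x IH]; first by rewrite /prefix_weight big_geq.
case: (ltnP p (prefix_weight j x)) => [/IH [i i_lt p_in] _|p_ge p_lt].
  by exists i => //; lia.
by exists x => //; rewrite p_ge.
Qed.

Lemma offset_onto j p : j < m -> p < b ->
  exists i q, [/\ i < n, part i = j, q < w i & offset i + q = p].
Proof.
move=> j_lt p_lt; rewrite -(block_sum j_lt) -/(prefix_weight j n) in p_lt.
have [i i_lt /andP [p_ge]] := prefix_weight_step p_lt.
rewrite prefix_weightS; case: eqP => [part_i|_]; last by lia.
have offset_i : offset i = prefix_weight j i by rewrite /offset part_i.
by exists i, (p - prefix_weight j i); split; rewrite ?offset_i //; lia.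
Qed.

Definition valid_key k : bool :=
  match k with
  | KeyK5 j => j <= m
  | KeyTri i q => (i < n) && (q < w i)
  | KeyK4 i q => (i < n) && (q.+1 < w i)
  end.

Definition bag k : seq vert :=
  match k with
  | KeyK5 j => [:: Cl5 j 0; Cl5 j 1; Cl5 j 2; Cl5 j 3; Cl5 j 4]
  | KeyTri i q => [:: Tri i q 0; Tri i q 1; Tri i q 2;
      path_vertex b (part i) (offset i + q); path_vertex b (part i) (offset i + q).+1]
  | KeyK4 i q => [:: Tri i q 1; Tri i q.+1 0; K4x i q 0; K4x i q 1;
      path_vertex b (part i) (offset i + q).+1]
  end.

Definition stamp k : nat * nat :=
  match k with
  | KeyK5 j => (j, 0)
  | KeyTri i q => (part i, (offset i + q).*2.+1)
  | KeyK4 i q => (part i, (offset i + q).*2.+2)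
  end.

Definition key_le k k' := lex_le (stamp k) (stamp k').

Lemma valid_KeyTri_bounds i q : valid_key (KeyTri i q) ->
  [/\ i < n, q < w i, part i < m & offset i + q < b].
Proof.
by move=> /andP [i_lt q_lt]; have := offset_bound i_lt; have := part_lt i_lt; split=> //; lia.
Qed.

Lemma valid_KeyK4_bounds i q : valid_key (KeyK4 i q) ->
  [/\ i < n, q.+1 < w i, part i < m & offset i + q.+1 < b].
Proof.
by move=> /andP [i_lt q_lt]; have := offset_bound i_lt; have := part_lt i_lt; split=> //; lia.
Qed.

Lemma stamp_inj k k' : valid_key k -> valid_key k' -> stamp k = stamp k' -> k = k'.
Proof.
case: k => [j|i q|i q]; case: k' => [j'|i' q'|i' q'] //=; first by move=> _ _ [->].
all: move=> /andP [_ qi] /andP [_ q'i'] [part_ii' E]; try lia.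
all: have {}E : offset i + q = offset i' + q' by lia.
- by have [-> ->] := offset_inj qi q'i' part_ii' E.
- by have [-> ->] := offset_inj (ltnW qi) (ltnW q'i') part_ii' E.
Qed.

Definition bag_convex x := forall k1 k2 k3,
  valid_key k1 -> valid_key k2 -> valid_key k3 -> key_le k1 k2 -> key_le k2 k3 ->
  x \in bag k1 -> x \in bag k3 -> x \in bag k2.

Lemma bag_convex_interval x lo hi :
  (forall k, valid_key k -> x \in bag k = lex_le lo (stamp k) && lex_le (stamp k) hi) ->
  bag_convex x.
Proof.
rewrite /bag_convex /key_le => x_in k1 k2 k3 v1 v2 v3 le12 le23.
rewrite !x_in //; move: le12 le23.
case: (stamp k1) (stamp k2) (stamp k3) lo hi {x_in} => [? ?] [? ?] [? ?] [? ?] [? ?].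
by rewrite /lex_le /=; lia.
Qed.

Lemma bag_convex_single x k0 :
  (forall k, valid_key k -> x \in bag k -> k = k0) -> bag_convex x.
Proof.
move=> x_in k1 k2 k3 v1 v2 v3 le12 le23 x1 x3.
have E1 := x_in _ v1 x1; have E3 := x_in _ v3 x3; subst k1 k3.
suff -> : k2 = k0 by [].
apply: stamp_inj => //; move: le12 le23; rewrite /key_le.
by case: (stamp k0) (stamp k2) => [? ?] [? ?]; rewrite /lex_le /= => ? ?; congr pair; lia.
Qed.

Lemma bag_convex_pair x k0 k1 : valid_key k0 -> valid_key k1 ->
  (stamp k1).1 = (stamp k0).1 -> (stamp k1).2 = (stamp k0).2.+1 ->
  (forall k, valid_key k -> x \in bag k -> k = k0 \/ k = k1) -> bag_convex x.
Proof.
move=> v0 v1 E1 E2 x_in ka kb kc va vb vc lab lbc xa xc.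
suff : stamp kb = stamp ka \/ stamp kb = stamp kc.
  by case=> [/(stamp_inj vb va) | /(stamp_inj vb vc)] ->.
move: lab lbc E1 E2; rewrite /key_le.
case: (x_in _ va xa) (x_in _ vc xc) => -> [] ->.
all: case: (stamp k0) (stamp k1) (stamp kb) => [a1 a2] [c1 c2] [b1 b2].
all: rewrite /lex_le /= => ? ? ? ?; have -> : b1 = a1 by lia.
all: have [b_a|b_c] : b2 = a2 \/ b2 = c2 by lia.
all: first [by left; congr pair; lia | by right; congr pair; lia].
Qed.

Lemma Tri_in_bag k i q r : Tri i q r \in bag k ->
  [\/ k = KeyTri i q /\ r < 3, r = 1 /\ k = KeyK4 i q | [/\ r = 0, 0 < q & k = KeyK4 i q.-1]].
Proof.
case: k => [j|i' q'|i' q'] /mem_In /= [E|[E|[E|[E|[E|[]]]]]]; try discriminate.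
all: try by case: (path_vertex_neq_Tri E).
all: case: E => <- <- <-.
all: first [by constructor 1 | by constructor 2 | by constructor 3].
Qed.

Lemma bag_convex_Tri i q r : bag_convex (Tri i q r).
Proof.
have [tri_valid|tri_invalid] := boolP (valid_key (KeyTri i q)); last first.
  (* Such a vertex lies in no valid bag, so any key serves as k0. *)
  apply: (@bag_convex_single _ (KeyK5 0)) => k vk.
  case/Tri_in_bag => [[Ek _]|[_ Ek]|[_ q_gt0 Ek]]; subst k.
  - by rewrite vk in tri_invalid.
  - by move: vk tri_invalid => /= /andP [-> /ltnW ->].
  - by move: vk tri_invalid => /= /andP [->]; rewrite prednK // => ->.
case: r => [|[|r]].
- case: q tri_valid => [|q] tri_valid.
    apply: (@bag_convex_single _ (KeyTri i 0)) => k _.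
    by case/Tri_in_bag => [[-> _]|[]|[]].
  apply: (@bag_convex_pair _ (KeyK4 i q) (KeyTri i q.+1)) => //=; first by lia.
  by move=> k _; case/Tri_in_bag => [[-> _]|[]|[_ _ ->]] //; [right|left].
- have [K4_valid|K4_invalid] := boolP (valid_key (KeyK4 i q)).
    apply: (@bag_convex_pair _ (KeyTri i q) (KeyK4 i q)) => //=.
    by move=> k _; case/Tri_in_bag => [[-> _]|[_ ->]|[]] //; [left|right].
  apply: (@bag_convex_single _ (KeyTri i q)) => k vk.
  by case/Tri_in_bag => [[-> _]|[_ Ek]|[]] //; move: vk; rewrite Ek (negbTE K4_invalid).
- apply: (@bag_convex_single _ (KeyTri i q)) => k _.
  by case/Tri_in_bag => [[-> _]|[]|[]].
Qed.

Lemma bag_convex_K4x i q r : bag_convex (K4x i q r).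
Proof.
apply: (@bag_convex_single _ (KeyK4 i q)) => k _.
case: k => [j|i' q'|i' q'] /mem_In /= [E|[E|[E|[E|[E|[]]]]]]; try discriminate.
all: try by case: (path_vertex_neq_K4x E).
all: by case: E => -> ->.
Qed.

Lemma Cl5_in_bag k j r : valid_key k -> Cl5 j r \in bag k ->
  [\/ k = KeyK5 j /\ r < 5,
      exists i q, [/\ k = KeyTri i q, part i = j, offset i + q = 0 & r = 1] |
      exists i q, [/\ k = KeyTri i q, (part i).+1 = j, (offset i + q).+1 = b & r = 0]].
Proof.
case: k => [j'|i q|i q] vk /mem_In /= [E|[E|[E|[E|[E|[]]]]]]; try discriminate.
1-5: by case: E => <- <-; constructor 1.
all: case/path_vertex_eq_Cl5: E => [[p0 -> ->]|[pb -> ->]].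
all: first [by constructor 2; exists i, q | by constructor 3; exists i, q | idtac].
all: first [have := valid_KeyTri_bounds vk | have := valid_KeyK4_bounds vk]; case; lia.
Qed.

Lemma bag_convex_Cl5 j r : bag_convex (Cl5 j r).
Proof.
case: r => [|[|r]]; last first.
- apply: (@bag_convex_single _ (KeyK5 j)) => k vk.
  by case/(Cl5_in_bag vk) => [[-> _]|[? [? []]]|[? [? []]]].
- apply: (@bag_convex_interval _ (j, 0) (j, 1)) => k vk; apply/idP/idP.
  + by case/(Cl5_in_bag vk) => [[-> _]|[i [q [-> <- ? _]]]|[? [? [_ _ _ ?]]]] //;
      rewrite /lex_le /=; lia.
  + case: k vk => [j'|i q|i q] vk; rewrite /lex_le /= => lo_hi.
    * have -> : j' = j by lia.
      by rewrite !inE eqxx ?orbT.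
    * have -> : j = part i by lia.
      have -> : offset i + q = 0 by lia.
      by rewrite path_vertex0 !inE eqxx ?orbT.
    * by have := valid_KeyK4_bounds vk; case; lia.
case: j => [|j].
  apply: (@bag_convex_single _ (KeyK5 0)) => k vk.
  by case/(Cl5_in_bag vk) => [[-> _]|[? [? [_ _ _ ?]]]|[? [? [_ ?]]]].
(* For b = 0 both endpoints of P_b^j are Cl5 j 1, so Cl5 j.+1 0 is only in K_5^j.+1. *)
have [b0|b_gt0] := posnP b.
  apply: (@bag_convex_single _ (KeyK5 j.+1)) => k vk.
  by case/(Cl5_in_bag vk) => [[-> _]|[? [? [_ _ _ ?]]]|[? [? [_ _ ? _]]]] //; lia.
apply: (@bag_convex_interval _ (j, (b.*2).-1) (j.+1, 0)) => k vk; apply/idP/idP.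
- by case/(Cl5_in_bag vk) => [[-> _]|[? [? [_ _ _ ?]]]|[i [q [-> part_i pos _]]]] //;
    rewrite /lex_le /=; lia.
- case: k vk => [j'|i q|i q] vk; rewrite /lex_le /= => lo_hi.
  + have -> : j' = j.+1 by lia.
    by rewrite !inE eqxx.
  + have [_ _ _ pos_lt] := valid_KeyTri_bounds vk.
    have -> : j = part i by lia.
    have -> : (offset i + q).+1 = b by lia.
    by rewrite path_vertex_last // !inE eqxx ?orbT.
  + by have := valid_KeyK4_bounds vk; case; lia.
Qed.

Lemma Pth_in_bag k j p : valid_key k -> Pth j p \in bag k ->
  0 < p < b /\ lex_le (j, p.*2.-1) (stamp k) && lex_le (stamp k) (j, p.*2.+1).
Proof.
case: k => [j'|i q|i q] vk /mem_In /= [E|[E|[E|[E|[E|[]]]]]]; try discriminate.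
all: case/path_vertex_eq_Pth: E => p_gt0 p_neqb -> ->.
all: first [have := valid_KeyTri_bounds vk | have := valid_KeyK4_bounds vk]; case.
all: by rewrite /lex_le /=; lia.
Qed.

Lemma bag_convex_Pth j p : bag_convex (Pth j p).
Proof.
move=> k1 k2 k3 v1 v2 v3 le12 le23 x1; have [p_lt _] := Pth_in_bag v1 x1.
move: k1 k2 k3 v1 v2 v3 le12 le23 x1.
apply: (@bag_convex_interval _ (j, p.*2.-1) (j, p.*2.+1)) => k vk; apply/idP/idP.
  by case/(Pth_in_bag vk).
rewrite -(path_vertex_inner j p_lt).
case: k vk => [j'|i q|i q] vk; rewrite /lex_le /= => lo_hi.
- by lia.
- have [_ _ _ pos_lt] := valid_KeyTri_bounds vk.
  have -> : j = part i by lia.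
  have [->|->] : p = offset i + q \/ p = (offset i + q).+1 by lia.
    by rewrite !inE eqxx ?orbT.
  by rewrite !inE eqxx ?orbT.
- have [_ _ _ pos_lt] := valid_KeyK4_bounds vk.
  have -> : j = part i by lia.
  have -> : p = (offset i + q).+1 by lia.
  by rewrite !inE eqxx ?orbT.
Qed.

Lemma bag_convex_all x : bag_convex x.
Proof.
case: x => [i q r|i q r|j r|j p].
- exact: bag_convex_Tri.
- exact: bag_convex_K4x.
- exact: bag_convex_Cl5.
- exact: bag_convex_Pth.
Qed.

Definition keys := [seq KeyK5 j | j <- iota 0 m.+1] ++
  flatten [seq [seq KeyTri i q | q <- iota 0 (w i)] ++ [seq KeyK4 i q | q <- iota 0 (w i).-1]
          | i <- iota 0 n].

Lemma mem_keys k : (k \in keys) = valid_key k.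
Proof.
apply/idP/idP.
  rewrite mem_cat => /orP [/mapP [j]|/flatten_mapP [i]]; rewrite mem_iota.
    by move=> j_lt -> /=; lia.
  move=> i_lt; rewrite mem_cat => /orP [/mapP [q]|/mapP [q]];
    by rewrite mem_iota => q_lt -> /=; lia.
rewrite mem_cat; case: k => [j|i q|i q] vk; rewrite /= in vk; apply/orP.
  by left; apply: map_f; rewrite mem_iota; lia.
all: right; apply/flatten_mapP; exists i; first by rewrite mem_iota; lia.
all: rewrite mem_cat; apply/orP.
  by left; apply: map_f; rewrite mem_iota; lia.
by right; apply: map_f; rewrite mem_iota; lia.
Qed.

Lemma size_keys : size keys = m.+1 + sumn [seq w i + (w i).-1 | i <- iota 0 n].
Proof.
rewrite size_cat size_map size_iota size_flatten /shape -map_comp; congr (_ + sumn _).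
by apply: eq_map => i /=; rewrite size_cat !size_map !size_iota.
Qed.

Lemma key_le_refl : reflexive key_le.
Proof. by move=> k; rewrite /key_le /lex_le; case: (stamp k) => [? ?] /=; lia. Qed.

Lemma key_le_trans : transitive key_le.
Proof.
move=> k2 k1 k3; rewrite /key_le /lex_le.
by case: (stamp k1) (stamp k2) (stamp k3) => [? ?] [? ?] [? ?] /=; lia.
Qed.

Lemma key_le_total : total key_le.
Proof.
by move=> k k'; rewrite /key_le /lex_le; case: (stamp k) (stamp k') => [? ?] [? ?] /=; lia.
Qed.

Definition decomposition := sorted_bags key_le bag keys.

Variable S : seq nat.
Hypotheses (w_nth : w =1 nth 0 S) (size_S : size S = n) (n_eq : n = 3 * m).
Hypothesis w_gt0 : forall i, i < n -> 0 < w i.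

Lemma GSb_vertex_bag k x : valid_key k -> x \in bag k -> GSb_vertex S m b x.
Proof.
have path_edge j p : j < m -> p < b ->
    GSb_clique S m b [:: path_vertex b j p; path_vertex b j p.+1].
  by move=> j_lt p_lt; right; right; right; exists j, p.
case: k => [j|i q|i q] vk x_in.
  by exists (bag (KeyK5 j)) => //; right; right; left; exists j.
all: move/mem_In: x_in => /= [<-|[<-|[<-|[<-|[<-|[]]]]]].
all: first [have [i_lt q_lt part_i_lt pos_lt] := valid_KeyTri_bounds vk
           |have [i_lt q_lt part_i_lt pos_lt] := valid_KeyK4_bounds vk].
all: first [ exists [:: Tri i q 0; Tri i q 1; Tri i q 2];
               [by left; exists i, q; rewrite -n_eq -w_nth | by rewrite !inE eqxx ?orbT]
           | exists [:: Tri i q 1; Tri i q.+1 0; K4x i q 0; K4x i q 1];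
               [by right; left; exists i, q; rewrite -n_eq -w_nth
               | by rewrite !inE eqxx ?orbT]
           | exists [:: path_vertex b (part i) (offset i + q);
                        path_vertex b (part i) (offset i + q).+1];
               [by apply: path_edge; lia | by rewrite !inE eqxx ?orbT]
           | exists [:: path_vertex b (part i) (offset i + q).+1;
                        path_vertex b (part i) (offset i + q).+2];
               [by apply: path_edge; lia | by rewrite !inE eqxx ?orbT] ].
Qed.

Lemma GSb_clique_in_bag C : GSb_clique S m b C ->
  exists2 k, valid_key k & {subset C <= bag k}.
Proof.
case=> [[i [q [i_lt q_lt ->]]]|[[i [q [i_lt q_lt ->]]]|[[j [j_le ->]]|[j [p [j_lt p_lt ->]]]]]].
- exists (KeyTri i q); first by rewrite /= w_nth n_eq i_lt q_lt.
  by move=> x /mem_In /= x_in; apply/mem_In => /=; tauto.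
- exists (KeyK4 i q); first by rewrite /= w_nth n_eq i_lt q_lt.
  by move=> x /mem_In /= x_in; apply/mem_In => /=; tauto.
- by exists (KeyK5 j).
- have [i [q [i_lt part_i q_lt pos]]] := offset_onto j_lt p_lt.
  exists (KeyTri i q); first by rewrite /= i_lt q_lt.
  by move=> x /mem_In /= x_in; apply/mem_In; rewrite /= part_i pos; tauto.
Qed.

Lemma GSb_decomposition :
  [/\ is_path_decomposition (GSb_vertex S m b) (GSb_edge S m b) decomposition,
      pd_width_le decomposition 4 &
      pd_length decomposition + n = m.+1 + (sumn S).*2].
Proof.
split.
- apply: is_path_decomposition_sorted_bags.
  + exact: key_le_refl.
  + exact: key_le_trans.
  + exact: key_le_total.
  + by move=> k x; rewrite mem_keys; apply: GSb_vertex_bag.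
  + move=> x [C /GSb_clique_in_bag [k vk C_k] x_C].
    by exists k; rewrite ?mem_keys ?C_k.
  + move=> x y [_ [C /GSb_clique_in_bag [k vk C_k] /andP [x_C y_C]]].
    by exists k; rewrite ?mem_keys ?C_k.
  + move=> x k1 k2 k3; rewrite !mem_keys; exact: bag_convex_all.
- by apply: sorted_bags_width; case.
have w_pos : all (fun i => 0 < w i) (iota 0 n).
  by apply/allP => i; rewrite mem_iota => /andP [_ i_lt]; exact: w_gt0.
rewrite /pd_length size_sorted_bags size_keys -addnA -{2}(size_iota 0 n).
by rewrite sumn_add_pred // (eq_map w_nth) -size_S -/(mkseq _ _) mkseq_nth.
Qed.

End Construction.

Local Open Scope ring_scope.

Theorem mainTheorem9 (m : nat) (S : seq nat) (b : int) :
  size S = (3 * m)%N ->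
  (forall i, (i < 3 * m)%N -> (0 < nth 0 S i)%N) ->
  (exists P : 'I_(3 * m) -> 'I_m,
     forall j : 'I_m, ((\sum_(i < 3 * m | P i == j) nth 0 S i)%N)%:Z = b) ->
  exists Xs : seq (seq vert),
    [/\ is_path_decomposition (GSb_vertex S m `|b|%N) (GSb_edge S m `|b|%N) Xs,
        pd_width_le Xs 4 &
        (pd_length Xs)%:Z <= 1 - 2 * m%:Z + 2 * (sumn S)%:Z].
Proof.
move=> size_S S_gt0 [P sum_P].
pose part (i : nat) : nat := if insub i is Some o then val (P o) else 0%N.
have part_val (o : 'I_(3 * m)) : part (val o) = val (P o) by rewrite /part valK.
have part_lt i : (i < 3 * m)%N -> (part i < m)%N.
  by move=> i_lt; have /= -> := part_val (Ordinal i_lt).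
have block_sum j : (j < m)%N ->
    (\sum_(0 <= i < 3 * m | part i == j) nth 0 S i)%N = `|b|%N.
  move=> j_lt; rewrite -(sum_P (Ordinal j_lt)) /= big_mkord.
  by apply: eq_bigl => i; rewrite part_val.
have [pd width len] := GSb_decomposition part_lt block_sum (frefl _) size_S erefl S_gt0.
exists (decomposition m `|b|%N (3 * m) (nth 0 S) part); split=> //.
by move: len; rewrite /pd_length; move: (size _) => k; lia.
Qed.
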